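(* Let $\mathcal{A},\mathcal{B},\mathcal{C}$ be finite-dimensional complex Hilbert spaces with $\dim\mathcal{C}\geq\dim(\mathcal{A}\otimes\mathcal{B})$, let $\ket{\mathrm{idle}}\in\mathcal{B}$ be a unit vector, and let $L$ be a subunitary operator on $\mathcal{A}\otimes\mathcal{B}$ with $L(\ket{\varphi}\otimes\ket{\mathrm{idle}})=\ket{\varphi}\otimes\ket{\mathrm{idle}}$ for all $\ket{\varphi}\in\mathcal{A}$. Let $\ket{\xi}\neq 0$ and $\ket{\tau}$ be vectors in $\mathcal{A}\otimes\mathcal{B}\otimes\mathcal{C}$. Let $\overline{\pi}$ be a positive semidefinite operator on $\mathcal{A}\otimes\mathcal{B}$ satisfying $$\mathrm{tr}_{\mathcal{B}}\left(L\overline{\pi}L^\dagger-\overline{\pi}\right)=\mathrm{tr}_{\mathcal{B}\mathcal{C}}\left(\ket{\tau}\bra{\tau}-\ket{\xi}\bra{\xi}\right),$$ and let $\ket{v}\in\mathcal{A}\otimes\mathcal{B}\otimes\mathcal{C}$ be a purification of $\overline{\pi}$, i.e. $\mathrm{tr}_{\mathcal{C}}\ket{v}\bra{v}=\overline{\pi}$. Then for every integer $T'>0$, the operators $$\pi^j=\left(\frac{T'-j}{T'}\,\mathrm{tr}_{\mathcal{B}\mathcal{C}}\ket{\xi}\bra{\xi}+\frac{j}{T'}\,\mathrm{tr}_{\mathcal{B}\mathcal{C}}\ket{\tau}\bra{\tau}\right)\otimes\ket{\mathrm{idle}}\bra{\mathrm{idle}}+\frac{\overline{\pi}}{T'},\qquad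 0\leq j<T',$$ are positive semidefinite and satisfy $\mathrm{tr}_{\mathcal{B}}\pi^{j+1}=\mathrm{tr}_{\mathcal{B}}(L\pi^jL^\dagger)$ for $0\leq j\leq T'-2$, and they constitute a $T'$-timestep algorithm (with ancilla space $\mathcal{C}\otimes\mathbb{C}^2$, i.e. an added qubit) transforming $$\ket{\xi}\otimes\ket{0}+\frac{\ket{v}}{\sqrt{T'}}\otimes\ket{1}\ \mapsto\ \ket{\tau}\otimes\ket{0}+\frac{\ket{v}}{\sqrt{T'}}\otimes\ket{1}.$$
   Context: A $T$-timestep algorithm with ancilla space $\mathcal{C}'$ consists of unitaries $U_0,\dots,U_T$ on $\mathcal{B}\otimes\mathcal{C}'$ and applies $E=(I_{\mathcal{A}}\otimes U_T)(L\otimes I_{\mathcal{C}'})(I_{\mathcal{A}}\otimes U_{T-1})\cdots(L\otimes I_{\mathcal{C}'})(I_{\mathcal{A}}\otimes U_0)$ to a state in $\mathcal{A}\otimes\mathcal{B}\otimes\mathcal{C}'$; it transforms $\ket{x}\mapsto\ket{y}$ if $E\ket{x}=\ket{y}$. Its intermediate states are $\ket{\Phi^j}=(I_{\mathcal{A}}\otimes U_j)(L\otimes I)\cdots(L\otimes I)(I_{\mathcal{A}}\otimes U_0)\ket{x}$ ($j$ applications of $L$), and ''the sequence $(\pi^j)$ constitutes the algorithm'' means $\pi^j=\mathrm{tr}_{\mathcal{C}'}\ket{\Phi^j}\bra{\Phi^j}$. Subunitary means $\|L\ket{\varphi}\|\leq\|\ket{\varphi}\|$ for all $\ket{\varphi}$.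 States need not be normalized; $\mathrm{tr}_{\mathcal{B}}$ etc. are partial traces. *)

(* A finite-dimensional
   Hilbert space with a chosen orthonormal basis indexed by a finType I is
   modelled as functions I -> C; operators as matrices I -> I -> C.
   Tensor products are indexed by product types. *)
From HB Require Import structures.
From mathcomp Require Import all_boot all_order all_algebra.
From mathcomp Require Import reals.
From mathcomp Require Import complex.
Set Implicit Arguments. Unset Strict Implicit. Unset Printing Implicit Defensive.
Import Order.TTheory GRing.Theory Num.Theory.
Local Open Scope ring_scope.

Section Defs.
Variable C : numClosedFieldType.

Definition vec (I : finType) := I -> C.
Definition op (I : finType) := I -> I -> C.

Definition opeq (I : finType) (X Y : op I) := forall i j, X i j = Y i j.
Definition veceq (I : finType) (u w : vec I) := forall i, u i = w i.

Definition idop (I : finType) : op I := fun i j => (i == j)%:R.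
Definition opmul (I : finType) (X Y : op I) : op I :=
  fun i k => \sum_j X i j * Y j k.
Definition adj (I : finType) (X : op I) : op I := fun i j => (X j i)^*.
Definition apply (I : finType) (X : op I) (v : vec I) : vec I :=
  fun i => \sum_j X i j * v j.
Definition outer (I : finType) (u w : vec I) : op I := fun i j => u i * (w j)^*.
Definition norm2 (I : finType) (v : vec I) : C := \sum_i `|v i| ^+ 2.

Definition unitary (I : finType) (U : op I) :=
  opeq (opmul (adj U) U) (@idop I) /\ opeq (opmul U (adj U)) (@idop I).
Definition subunitary (I : finType) (L : op I) :=
  forall v : vec I, norm2 (apply L v) <= norm2 v.
Definition psd (I : finType) (X : op I) :=
  forall v : vec I, 0 <= \sum_i \sum_j (v i)^* * X i j * v j.

Definition kron (I J : finType) (u : vec I) (w : vec J) : vec (I * J)%type :=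
  fun p => u p.1 * w p.2.
Definition kronop (I J : finType) (X : op I) (Y : op J) : op (I * J)%type :=
  fun p q => X p.1 q.1 * Y p.2 q.2.

Definition ptr2 (I J : finType) (X : op (I * J)%type) : op I :=
  fun i k => \sum_j X (i, j) (k, j).
Definition trBC (IA IB IC : finType) (X : op ((IA * IB) * IC)%type) : op IA :=
  fun a a' => \sum_b \sum_c X ((a, b), c) ((a', b), c).

Definition liftU (IA IB IC : finType) (U : op (IB * IC)%type)
  : op ((IA * IB) * IC)%type :=
  fun p q => (p.1.1 == q.1.1)%:R * U (p.1.2, p.2) (q.1.2, q.2).
Definition liftL (IA IB IC : finType) (L : op (IA * IB)%type)
  : op ((IA * IB) * IC)%type :=
  fun p q => L p.1 q.1 * (p.2 == q.2)%:R.

Fixpoint Phi (IA IB IC : finType) (L : op (IA * IB)%type)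
  (Us : nat -> op (IB * IC)%type) (x : vec ((IA * IB) * IC)%type) (j : nat)
  : vec ((IA * IB) * IC)%type :=
  match j with
  | 0 => apply (@liftU IA IB IC (Us 0%N)) x
  | j'.+1 => apply (@liftU IA IB IC (Us j)) (apply (@liftL IA IB IC L) (Phi L Us x j'))
  end.

Definition algorithm_constituted (IA IB IC' : finType) (L : op (IA * IB)%type)
  (T : nat) (pi : nat -> op (IA * IB)%type)
  (x y : vec ((IA * IB) * IC')%type) :=
  exists Us : nat -> op (IB * IC')%type,
    [/\ forall j, (j <= T)%N -> unitary (Us j),
        veceq (Phi L Us x T) y
      & forall j, (j < T)%N ->
          opeq (ptr2 (outer (Phi L Us x j) (Phi L Us x j))) (pi j)].

Definition ket0 : vec 'I_2 := fun q => (q == ord0)%:R.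
Definition ket1 : vec 'I_2 := fun q => (q == ord_max)%:R.

Definition attachq (IAB IC : finType) (u : vec (IAB * IC)%type) (q : vec 'I_2)
  : vec (IAB * (IC * 'I_2))%type :=
  fun p => u (p.1, p.2.1) * q p.2.2.

End Defs.

(* Since L fixes every
   operator X (x) |idle><idle|, the balance condition on pibar is exactly what
   makes tr_B (L pi^j L^dag) = tr_B pi^(j+1).  Each pi^j is a reduced state:
   purify its A-part inside A (x) C (possible as dim C >= dim A) and put
   v/sqrt T' on the ancilla |1>; in particular pi^j is positive.
   Consecutive vectors of the algorithm -- the input or (L (x) I) Phi^j on one
   side, Phi^(j+1) or the output on the other -- then have equal reduced states
   on A, so by the unitary freedom of purifications a unitary on B (x) C' maps
   one to the other.  Unitary freedom is proved on matrices: diagonalise the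
   common Gram matrix, normalise the nonzero rows, and complete the two
   resulting orthonormal families to unitaries. *)

From HB Require Import structures.
From mathcomp Require Import all_boot all_order all_algebra.
From mathcomp Require Import reals complex.
From mathcomp Require Import spectral sesquilinear ring.
From mathcomp Require boolp.
Set Implicit Arguments. Unset Strict Implicit. Unset Printing Implicit Defensive.
Import Order.TTheory GRing.Theory Num.Theory.
Local Open Scope ring_scope.
Local Open Scope sesquilinear_scope.

Section UnitaryFreedom.
Variable C : numClosedFieldType.
Local Notation ortho A := (orthomx (@Num.Def.conjC C) (hermitian1mx _) A).

Lemma trmxC_mul m n p (A : 'M[C]_(m, n)) (B : 'M[C]_(n, p)) :
  (A *m B)^t* = B^t* *m A^t*.
Proof. by rewrite trmx_mul map_mxM. Qed.

Lemma mulmxtC0_sym m p n (A : 'M[C]_(m, n)) (B : 'M[C]_(p, n)) :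
  A *m B^t* = 0 -> B *m A^t* = 0.
Proof. by move=> AB0; rewrite -[B]trmxCK -trmxC_mul AB0 trmx0 map_mx0. Qed.

Lemma unitarymx_trCmul m n (M : 'M[C]_(m, n)) :
  M \is unitarymx -> m = n -> M^t* *m M = 1%:M.
Proof. by move=> Mu mn; rewrite -[_ *m M]mul1mx mulmxA mulmxKtV. Qed.

Lemma pid_mx_unitary r n : (r <= n)%N -> (pid_mx r : 'M[C]_(r, n)) \is unitarymx.
Proof.
by move=> le_rn; apply/unitarymxP; rewrite tr_pid_mx map_pid_mx pid_mx_id // pid_mx_1.
Qed.

Lemma submx_unitarymx_proj m p n (A : 'M[C]_(m, n)) (B : 'M[C]_(p, n)) :
  B \is unitarymx -> (A <= B)%MS -> A *m B^t* *m B = A.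
Proof. by move=> Bu /submxP[D ->]; rewrite mulmxtVK. Qed.

Lemma mulmxtC_mxE m p n (A : 'M[C]_(m, n)) (B : 'M[C]_(p, n)) i i' :
  (A *m B^t*) i i' = \sum_j A i j * (B i' j)^*.
Proof. by rewrite !mxE; apply: eq_bigr => j _; rewrite !mxE. Qed.

Lemma gram_mx_diag_ge0 m n (M : 'M[C]_(m, n)) i : 0 <= (M *m M^t*) i i.
Proof. by rewrite mulmxtC_mxE sumr_ge0 // => j _; apply: mul_conjC_ge0. Qed.

Lemma row_eq0_gram m n (M : 'M[C]_(m, n)) i : (M *m M^t*) i i = 0 -> row i M = 0.
Proof.
rewrite mulmxtC_mxE => /psumr_eq0P Mi0; apply/rowP => j; rewrite !mxE.
by apply/eqP; rewrite -mul_conjC_eq0 Mi0 // => k _; apply: mul_conjC_ge0.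
Qed.

Lemma unitarymx_compl r n (F : 'M[C]_(r, n)) : F \is unitarymx ->
  exists2 P : 'M[C]_(n - r, n), P \is unitarymx & F *m P^t* = 0.
Proof.
move=> Fu; have rkF : \rank (ortho F) = (n - r)%N by rewrite rank_ortho mxrank_unitary.
set P := schmidt (row_base (ortho F)).
have Pu : P \is unitarymx by rewrite schmidt_unitarymx // rank_leq_col.
have FP : F *m P^t* = 0.
  apply/orthomx1P; rewrite orthomx_sym.
  by rewrite eqmx_schmidt_free ?row_base_free // eq_row_base.
by rewrite -rkF; exists P.
Qed.

Lemma unitarymx_extend r n (F G : 'M[C]_(r, n)) :
  F \is unitarymx -> G \is unitarymx ->
  exists2 V : 'M[C]_n, V \is unitarymx & F *m V = G.
Proof.
move=> Fu Gu; have [P Pu FP] := unitarymx_compl Fu; have [Q Qu GQ] := unitarymx_compl Gu.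
have QG := mulmxtC0_sym GQ.
have rn : (r + (n - r))%N = n by rewrite subnKC // -(mxrank_unitary Fu) rank_leq_col.
have FPu : col_mx F P \is unitarymx.
  apply/unitarymxP; rewrite tr_col_mx map_row_mx mul_col_row !(unitarymxP _) //.
  by rewrite FP (mulmxtC0_sym FP) -scalar_mx_block.
have FFPP : F^t* *m F + P^t* *m P = 1%:M.
  by rewrite -(unitarymx_trCmul FPu rn) tr_col_mx map_row_mx mul_row_col.
exists (F^t* *m G + P^t* *m Q).
  apply/unitarymxP; rewrite linearD /= map_mxD !trmxC_mul !trmxCK.
  rewrite mulmxDl !mulmxDr !mulmxA -!(mulmxA _ G) -!(mulmxA _ Q).
  by rewrite !(unitarymxP _) // GQ QG !mulmx0 !mul0mx !mulmx1 addr0 add0r.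
by rewrite mulmxDr !mulmxA !(unitarymxP _) // FP mul0mx addr0 mul1mx.
Qed.

Lemma unitarymx_freedom_diag m n (M N : 'M[C]_(m, n)) (d : 'rV[C]_m) :
  M *m M^t* = diag_mx d -> N *m N^t* = diag_mx d ->
  exists2 V : 'M[C]_n, V \is unitarymx & M *m V = N.
Proof.
move=> MMd NNd; pose S := [set i | d 0 i != 0].
pose nrm (X : 'M[C]_(m, n)) : 'M[C]_(#|S|, n) :=
  \matrix_(k, j) (X (enum_val k) j / sqrtC (d 0 (enum_val k))).
have dS (k : 'I_#|S|) : d 0 (enum_val k) != 0 by have := enum_valP k; rewrite inE.
have nrmE X k : row (enum_val k) X = sqrtC (d 0 (enum_val k)) *: row k (nrm X).
  by apply/rowP => j; rewrite !mxE mulrC divfK // sqrtC_eq0.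
have nrm_unitary X : X *m X^t* = diag_mx d -> nrm X \is unitarymx.
  move=> XXd; have d_ge0 i : 0 <= d 0 i.
    by have := gram_mx_diag_ge0 X i; rewrite XXd mxE eqxx mulr1n.
  have sqrt_real i : (sqrtC (d 0 i))^* = sqrtC (d 0 i) by rewrite geC0_conj ?sqrtC_ge0.
  apply/unitarymxP/matrixP => k k'; rewrite mulmxtC_mxE.
  under eq_bigr => j _ do rewrite !mxE rmorphM /= fmorphV /= sqrt_real mulrACA.
  rewrite -mulr_suml -mulmxtC_mxE XXd !mxE (inj_eq enum_val_inj).
  have [<-|kk'] := eqVneq k k'; last by rewrite mulr0n mul0r.
  by rewrite -invfM -expr2 sqrtCK mulfV ?dS.
have [V Vu nrmV] := unitarymx_extend (nrm_unitary M MMd) (nrm_unitary N NNd).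
exists V => //; apply/row_matrixP => i; rewrite row_mul.
have [iS|iNS] := boolP (i \in S).
  by rewrite -(enum_rankK_in iS iS) !nrmE -scalemxAl -row_mul nrmV.
have di0 : d 0 i = 0 by apply/eqP; move: iNS; rewrite inE negbK.
have Xi0 X : X *m X^t* = diag_mx d -> row i X = 0.
  by move=> XXd; apply: row_eq0_gram; rewrite XXd mxE eqxx mulr1n.
by rewrite Xi0 // Xi0 // mul0mx.
Qed.

Lemma spectral_diagE n (A : 'M[C]_n) : A \is normalmx ->
  spectralmx A *m A *m (spectralmx A)^t* = diag_mx (spectral_diag A).
Proof.
have Pu := spectral_unitarymx A.
move=> /orthomx_spectralP {2}->; rewrite invmx_unitary //.
by rewrite !mulmxA (unitarymxP Pu) mul1mx mulmxtVK.
Qed.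

Lemma unitarymx_freedom m n (M N : 'M[C]_(m, n)) :
  M *m M^t* = N *m N^t* -> exists2 V : 'M[C]_n, V \is unitarymx & M *m V = N.
Proof.
move=> MN; set A := M *m M^t*; set P := spectralmx A.
have Pu : P \is unitarymx := spectral_unitarymx A.
have An : A \is normalmx by apply/normalmxP; rewrite /A trmxC_mul trmxCK.
have PXd (X : 'M[C]_(m, n)) :
    X *m X^t* = A -> (P *m X) *m (P *m X)^t* = diag_mx (spectral_diag A).
  by move=> XXA; rewrite trmxC_mul !mulmxA -(mulmxA _ X) XXA spectral_diagE.
have [V Vu PMV] := unitarymx_freedom_diag (PXd M erefl) (PXd N (esym MN)).
exists V => //; rewrite -[M]mul1mx -(unitarymx_trCmul Pu) //.
by rewrite -!mulmxA (mulmxA P) PMV mulmxA unitarymx_trCmul // mul1mx.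
Qed.

Lemma gram_compress m k n (G : 'M[C]_(m, k)) : (m <= n)%N ->
  exists H : 'M[C]_(m, n), H *m H^t* = G *m G^t*.
Proof.
move=> le_mn; set B := schmidt (row_base G).
have Bu : B \is unitarymx by rewrite schmidt_unitarymx // rank_leq_col.
have GBB : G *m B^t* *m B = G.
  by rewrite submx_unitarymx_proj // eqmx_schmidt_free ?row_base_free // eq_row_base.
have le_rn : (\rank G <= n)%N := leq_trans (rank_leq_row G) le_mn.
exists (G *m B^t* *m pid_mx (\rank G)).
rewrite trmxC_mul -mulmxA (mulmxA (pid_mx _)) (unitarymxP (pid_mx_unitary le_rn)) mul1mx.
by rewrite trmxC_mul trmxCK mulmxA GBB.
Qed.

End UnitaryFreedom.

Section Gram.
Variable C : numClosedFieldType.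

Lemma opeq_eq (I : finType) (X Y : op C I) : opeq X Y -> X = Y.
Proof. by move=> XY; apply: boolp.funext => i; apply: boolp.funext => j; apply: XY. Qed.

Definition gram (A K : finType) (u : A -> K -> C) : op C A :=
  fun a a' => \sum_k u a k * (u a' k)^*.

Definition mxof (A K : finType) (u : A -> K -> C) : 'M[C]_(#|A|, #|K|) :=
  \matrix_(i, j) u (enum_val i) (enum_val j).

Lemma sum_enum_rank (K : finType) (F : 'I_#|K| -> C) :
  \sum_k F (enum_rank k) = \sum_j F j.
Proof. by rewrite (reindex enum_rank) //; apply/onW_bij/enum_rank_bij. Qed.

Lemma gram_mxof (A K : finType) (u : A -> K -> C) a a' :
  (mxof u *m (mxof u)^t*) (enum_rank a) (enum_rank a') = gram u a a'.
Proof.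
by rewrite mulmxtC_mxE -sum_enum_rank; apply: eq_bigr => k _; rewrite !mxE !enum_rankK.
Qed.

Lemma gram_unitary_freedom (A K : finType) (u w : A -> K -> C) :
  gram u = gram w ->
  exists2 U : op C K, unitary U & forall a, apply U (u a) = w a.
Proof.
move=> uw.
have [V Vu uVw] : exists2 V : 'M[C]_#|K|, V \is unitarymx & mxof u *m V = mxof w.
  apply: unitarymx_freedom; apply/matrixP => i i'.
  by rewrite -(enum_valK i) -(enum_valK i') !gram_mxof uw.
exists (fun k k' => V (enum_rank k') (enum_rank k)).
  split=> k k'; rewrite /opmul /adj /idop /=.
    have /matrixP/(_ (enum_rank k') (enum_rank k)) := unitarymxP Vu.
    rewrite mulmxtC_mxE -sum_enum_rank mxE (inj_eq enum_rank_inj) eq_sym => <-.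
    by apply: eq_bigr => l _; rewrite mulrC.
  have /matrixP/(_ (enum_rank k) (enum_rank k'))/(congr1 Num.conj) :=
    unitarymx_trCmul Vu erefl.
  rewrite [in RHS]mxE (inj_eq enum_rank_inj) rmorph_nat => <-.
  rewrite mxE rmorph_sum -sum_enum_rank; apply: eq_bigr => l _.
  by rewrite !mxE rmorphM /= conjCK mulrC.
move=> a; apply: boolp.funext => k.
have /matrixP/(_ (enum_rank a) (enum_rank k)) := uVw.
rewrite !mxE !enum_rankK => <-; rewrite -sum_enum_rank.
by apply: eq_bigr => l _; rewrite mxE !enum_rankK mulrC.
Qed.

Lemma gram_purify (A K K' : finType) (u : A -> K -> C) : (#|A| <= #|K'|)%N ->
  exists w : A -> K' -> C, gram w = gram u.
Proof.
move=> le_AK'; have [H HH] := gram_compress (mxof u) le_AK'.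
exists (fun a k => H (enum_rank a) (enum_rank k)); apply: opeq_eq => a a'.
by rewrite -[RHS]gram_mxof -HH mulmxtC_mxE -sum_enum_rank.
Qed.

End Gram.

Section Operators.
Variable C : numClosedFieldType.
Implicit Types I J IA IB IC : finType.

Lemma sum_pair I J (F : (I * J)%type -> C) : \sum_p F p = \sum_i \sum_j F (i, j).
Proof. by rewrite pair_bigA; apply: eq_bigr => -[]. Qed.

Lemma sum_delta I (i : I) (f : I -> C) : \sum_j (i == j)%:R * f j = f i.
Proof.
rewrite (bigD1 i) //= eqxx mul1r big1 ?addr0 // => j /negPf.
by rewrite eq_sym => ->; rewrite mul0r.
Qed.

Lemma psd_gram (A K : finType) (u : A -> K -> C) : psd (gram u).
Proof.
move=> v; have -> : \sum_i \sum_j (v i)^* * gram u i j * v j =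
    \sum_k (\sum_i (v i)^* * u i k) * (\sum_i (v i)^* * u i k)^*.
  under eq_bigr => i _ do under eq_bigr => j _ do rewrite mulr_sumr mulr_suml.
  under eq_bigr => i _ do rewrite exchange_big /=.
  rewrite exchange_big /=; apply: eq_bigr => k _.
  rewrite rmorph_sum mulr_suml; apply: eq_bigr => i _; rewrite mulr_sumr.
  by apply: eq_bigr => j _; rewrite rmorphM /= conjCK; ring.
by apply: sumr_ge0 => k _; apply: mul_conjC_ge0.
Qed.

Lemma trBC_outer IA IB IC (u : vec C ((IA * IB) * IC)%type) :
  trBC (outer u u) = gram (fun a (k : (IB * IC)%type) => u ((a, k.1), k.2)).
Proof. by apply: opeq_eq => a a'; rewrite /gram sum_pair. Qed.

Lemma gram_mix (A K : finType) (u w : A -> K -> C) (s t : C) : 0 <= s -> 0 <= t ->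
  (fun a a' => s * gram u a a' + t * gram w a a') =
  gram (fun a (k : (K * bool)%type) => if k.2 then sqrtC s * u a k.1 else sqrtC t * w a k.1).
Proof.
move=> s_ge0 t_ge0; apply: opeq_eq => a a'.
have sqrtCM_conj r : 0 <= r -> sqrtC r * (sqrtC r)^* = r.
  by move=> r_ge0; rewrite geC0_conj ?sqrtC_ge0 // -expr2 sqrtCK.
rewrite /gram sum_pair !mulr_sumr -big_split /=; apply: eq_bigr => k _.
rewrite big_bool /= !rmorphM /= -{1}[s]sqrtCM_conj // -{1}[t]sqrtCM_conj //; ring.
Qed.

Lemma apply_liftU IA IB IC (U : op C (IB * IC)%type) (u : vec C ((IA * IB) * IC)%type) a b c :
  apply (liftU U) u ((a, b), c) = apply U (fun k => u ((a, k.1), k.2)) (b, c).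
Proof.
rewrite /apply /liftU [LHS]sum_pair [LHS]sum_pair /=.
rewrite -(sum_delta a (fun a' => \sum_k U (b, c) k * u ((a', k.1), k.2))).
apply: eq_bigr => a' _.
rewrite sum_pair mulr_sumr; apply: eq_bigr => b' _.
by rewrite mulr_sumr; apply: eq_bigr => c' _ /=; ring.
Qed.

Lemma liftU_unitary_freedom IA IB IC (u w : vec C ((IA * IB) * IC)%type) :
  trBC (outer u u) = trBC (outer w w) ->
  exists2 U : op C (IB * IC)%type, unitary U & apply (liftU U) u = w.
Proof.
rewrite !trBC_outer => /gram_unitary_freedom[U Uu Uuw].
by exists U => //; apply: boolp.funext => -[[a b] c]; rewrite apply_liftU Uuw.
Qed.

Lemma apply_liftL IA IB IC (L : op C (IA * IB)%type) (u : vec C ((IA * IB) * IC)%type) p c :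
  apply (liftL L) u (p, c) = \sum_q L p q * u (q, c).
Proof.
rewrite /apply /liftL sum_pair; apply: eq_bigr => q _.
by rewrite -(sum_delta c (fun c' => L p q * u (q, c'))); apply: eq_bigr => c' _ /=; ring.
Qed.

Lemma ptr2_outer_liftL IA IB IC (L : op C (IA * IB)%type) (u : vec C ((IA * IB) * IC)%type) :
  ptr2 (outer (apply (liftL L) u) (apply (liftL L) u)) =
  opmul (opmul L (ptr2 (outer u u))) (adj L).
Proof.
apply: opeq_eq => p p'; rewrite /ptr2 /outer /opmul /adj.
under eq_bigr => c _ do rewrite !apply_liftL rmorph_sum mulr_suml.
under eq_bigr => c _ do under eq_bigr => i _ do rewrite mulr_sumr.
under [RHS]eq_bigr => q _ do rewrite mulr_suml.
under [RHS]eq_bigr => q _ do under eq_bigr => i _ do rewrite mulr_sumr mulr_suml.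
rewrite exchange_big [RHS]exchange_big /=; apply: eq_bigr => i _.
rewrite exchange_big /=; apply: eq_bigr => q _; apply: eq_bigr => c _.
by rewrite rmorphM /=; ring.
Qed.

Lemma conj_kronop_outer_fixed IA IB (L : op C (IA * IB)%type) (e : vec C IB) (Z : op C IA) :
  (forall phi : vec C IA, veceq (apply L (kron phi e)) (kron phi e)) ->
  opmul (opmul L (kronop Z (outer e e))) (adj L) = kronop Z (outer e e).
Proof.
move=> Lfix; apply: opeq_eq => p q.
have LZ r : opmul L (kronop Z (outer e e)) p r = Z p.1 r.1 * e p.2 * (e r.2)^*.
  transitivity (apply L (kron (Z^~ r.1) e) p * (e r.2)^*); last by rewrite Lfix.
  rewrite /opmul /apply mulr_suml; apply: eq_bigr => s _.
  by rewrite /kronop /outer /kron; ring.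
rewrite {1}/opmul; under eq_bigr => r _ do rewrite LZ.
transitivity (e p.2 * (apply L (kron (fun a => (Z p.1 a)^*) e) q)^*).
  rewrite /apply rmorph_sum mulr_sumr; apply: eq_bigr => r _.
  by rewrite /adj /kron !rmorphM /= conjCK; ring.
by rewrite Lfix /kron /kronop /outer rmorphM /= conjCK; ring.
Qed.

Lemma opmul_conjD I (L X Y : op C I) (t : C) :
  opmul (opmul L (fun p q => X p q + Y p q / t)) (adj L) =
  (fun p q => opmul (opmul L X) (adj L) p q + opmul (opmul L Y) (adj L) p q / t).
Proof.
apply: opeq_eq => p q; rewrite /opmul !mulr_suml -big_split /=.
apply: eq_bigr => r _; rewrite !mulr_suml -big_split /=.
by apply: eq_bigr => s _; ring.
Qed.

Lemma ptr2_kronop_outer IA IB (Z : op C IA) (e : vec C IB) :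
  ptr2 (kronop Z (outer e e)) = (fun a a' => Z a a' * norm2 e).
Proof.
apply: opeq_eq => a a'; rewrite /ptr2 /norm2 mulr_sumr.
by apply: eq_bigr => b _; rewrite normCK.
Qed.

Definition superpose I J (z v : vec C (I * J)%type) (s : C) : vec C (I * (J * 'I_2))%type :=
  fun p => attachq z (ket0 C) p + s * attachq v (ket1 C) p.

Lemma ptr2_outer_superpose I J (z v : vec C (I * J)%type) (s : C) :
  ptr2 (outer (superpose z v s) (superpose z v s)) =
  (fun p q => ptr2 (outer z z) p q + s * s^* * ptr2 (outer v v) p q).
Proof.
apply: opeq_eq => p q; rewrite /ptr2 sum_pair mulr_sumr -big_split /=.
apply: eq_bigr => c _; rewrite big_ord_recr big_ord1 /= /outer /superpose /attachq.
by rewrite /ket0 /ket1 /= rmorphD !rmorphM /= !rmorph_nat; ring.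
Qed.

Lemma trBCE IA IB IC (X : op C ((IA * IB) * IC)%type) : trBC X = ptr2 (ptr2 X).
Proof. by []. Qed.

Lemma ptr2_add_div I J (X Y : op C (I * J)%type) (t : C) :
  ptr2 (fun p q => X p q + Y p q / t) = (fun i i' => ptr2 X i i' + ptr2 Y i i' / t).
Proof. by apply: opeq_eq => i i'; rewrite /ptr2 big_split /= -mulr_suml. Qed.

Lemma ptr2_sub I J (X Y : op C (I * J)%type) :
  ptr2 (fun p q => X p q - Y p q) = (fun i i' => ptr2 X i i' - ptr2 Y i i').
Proof. by apply: opeq_eq => i i'; rewrite /ptr2 sumrB. Qed.

End Operators.

Section Interpolation.
Variables (C : numClosedFieldType) (IA IB IC : finType).
Variable idle : vec C IB.
Hypothesis norm2_idle : norm2 idle = 1.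
Variable L : op C (IA * IB)%type.
Hypothesis L_idle :
  forall phi : vec C IA, veceq (apply L (kron phi idle)) (kron phi idle).
Variables xi tau v : vec C ((IA * IB) * IC)%type.
Variable pibar : op C (IA * IB)%type.
Hypothesis balance :
  opeq (ptr2 (fun p q => opmul (opmul L pibar) (adj L) p q - pibar p q))
       (trBC (fun p q => outer tau tau p q - outer xi xi p q)).
Hypothesis v_purifies : opeq (ptr2 (outer v v)) pibar.
Variable T : nat.
Hypothesis T_gt0 : (0 < T)%N.

Definition interp j : op C IA := fun a a' =>
  ((T - j)%:R / T%:R) * trBC (outer xi xi) a a' + (j%:R / T%:R) * trBC (outer tau tau) a a'.

Definition pi j : op C (IA * IB)%type := fun p q =>
  kronop (interp j) (outer idle idle) p q + pibar p q / T%:R.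

Definition flag (u : vec C ((IA * IB) * IC)%type) : vec C ((IA * IB) * (IC * 'I_2))%type :=
  superpose u v (sqrtC T%:R)^-1.

Let T_neq0 : (T%:R : C) != 0. Proof. by rewrite pnatr_eq0 -lt0n. Qed.

Lemma interp0 : interp 0 = trBC (outer xi xi).
Proof. by apply: opeq_eq => a a'; rewrite /interp subn0 divff // !mul0r mul1r addr0. Qed.

Lemma interpT : interp T = trBC (outer tau tau).
Proof. by apply: opeq_eq => a a'; rewrite /interp subnn divff // !mul0r mul1r add0r. Qed.

Lemma interpS j : (j < T)%N -> interp j.+1 =
  (fun a a' => interp j a a' + (trBC (outer tau tau) a a' - trBC (outer xi xi) a a') / T%:R).
Proof.
move=> jT; apply: opeq_eq => a a'.
by rewrite /interp !natrB ?(ltnW jT) // -addn1 natrD; ring.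
Qed.

Lemma interp_gram j : interp j = gram (fun a (k : ((IB * IC) * bool)%type) =>
  if k.2 then sqrtC ((T - j)%:R / T%:R) * xi ((a, k.1.1), k.1.2)
  else sqrtC (j%:R / T%:R) * tau ((a, k.1.1), k.1.2)).
Proof. by rewrite /interp !trBC_outer gram_mix // divr_ge0 // ler0n. Qed.

Lemma interp_purification : (#|IA| <= #|IC|)%N ->
  exists w : nat -> IA -> IC -> C, forall j, gram (w j) = interp j.
Proof.
move=> le_IA_IC; have purify j : exists w : IA -> IC -> C, gram w = interp j.
  by rewrite interp_gram; apply: gram_purify.
by have [w hw] := boolp.choice purify; exists w.
Qed.

Lemma ptr2_pi j : ptr2 (pi j) = (fun a a' => interp j a a' + ptr2 pibar a a' / T%:R).
Proof.
rewrite /pi ptr2_add_div ptr2_kronop_outer norm2_idle.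
by apply: opeq_eq => a a'; rewrite mulr1.
Qed.

Lemma ptr2_conj_pibar : ptr2 (opmul (opmul L pibar) (adj L)) =
  (fun a a' => ptr2 pibar a a' + (trBC (outer tau tau) a a' - trBC (outer xi xi) a a')).
Proof.
have := opeq_eq balance; rewrite trBCE !ptr2_sub -!trBCE => bal.
apply: opeq_eq => a a'; have /= <- := congr1 (fun X => X a a') bal; ring.
Qed.

Lemma ptr2_conj_pi j : (j < T)%N ->
  ptr2 (opmul (opmul L (pi j)) (adj L)) = ptr2 (pi j.+1).
Proof.
move=> jT; rewrite [RHS]ptr2_pi interpS // /pi opmul_conjD conj_kronop_outer_fixed //.
rewrite ptr2_add_div ptr2_kronop_outer ptr2_conj_pibar norm2_idle.
by apply: opeq_eq => a a'; ring.
Qed.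

Lemma ptr2_outer_flag u : ptr2 (outer (flag u) (flag u)) =
  (fun p q => ptr2 (outer u u) p q + pibar p q / T%:R).
Proof.
have s_conj : (sqrtC T%:R)^-1 * ((sqrtC T%:R)^-1)^* = (T%:R : C)^-1.
  by rewrite fmorphV /= geC0_conj ?sqrtC_ge0 ?ler0n // -invfM -expr2 sqrtCK.
rewrite ptr2_outer_superpose s_conj (opeq_eq v_purifies).
by apply: opeq_eq => p q; rewrite mulrC.
Qed.

Lemma trBC_outer_flag u : trBC (outer (flag u) (flag u)) =
  (fun a a' => trBC (outer u u) a a' + ptr2 pibar a a' / T%:R).
Proof. by rewrite trBCE ptr2_outer_flag ptr2_add_div. Qed.

Variable w : nat -> IA -> IC -> C.
Hypothesis w_purifies : forall j, gram (w j) = interp j.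

Definition state j := flag (if j == T then tau else fun p => w j p.1.1 p.2 * idle p.1.2).

Definition pre_state j : vec C ((IA * IB) * (IC * 'I_2))%type :=
  if j is j'.+1 then apply (liftL L) (state j') else flag xi.

Lemma ptr2_outer_state j : (j < T)%N -> ptr2 (outer (state j) (state j)) = pi j.
Proof.
move=> jT; rewrite /state ltn_eqF // ptr2_outer_flag /pi -w_purifies.
by apply: opeq_eq => p q; rewrite /ptr2 /gram /kronop /outer mulr_suml; congr (_ + _);
  apply: eq_bigr => c _; ring.
Qed.

Lemma trBC_outer_state j : (j <= T)%N -> trBC (outer (state j) (state j)) = ptr2 (pi j).
Proof.
rewrite leq_eqVlt => /orP[/eqP->|jT].
  by rewrite /state eqxx trBC_outer_flag ptr2_pi interpT.
by rewrite trBCE ptr2_outer_state.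
Qed.

Lemma trBC_outer_pre_state j : (j <= T)%N ->
  trBC (outer (pre_state j) (pre_state j)) = ptr2 (pi j).
Proof.
case: j => [|j] jT; first by rewrite trBC_outer_flag ptr2_pi interp0.
by rewrite trBCE ptr2_outer_liftL ptr2_outer_state // ptr2_conj_pi.
Qed.

Lemma exists_step_unitaries : exists Us : nat -> op C (IB * (IC * 'I_2))%type,
  forall j, (j <= T)%N -> unitary (Us j) /\ apply (liftU (Us j)) (pre_state j) = state j.
Proof.
have step j : exists U : op C (IB * (IC * 'I_2))%type,
    (j <= T)%N -> unitary U /\ apply (liftU U) (pre_state j) = state j.
  have [jT|Tj] := leqP j T; last by exists (@idop _ _).
  have [|U Uu UpreE] := @liftU_unitary_freedom _ _ _ _ (pre_state j) (state j).
    by rewrite trBC_outer_pre_state // trBC_outer_state.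
  by exists U.
by have [Us hUs] := boolp.choice step; exists Us.
Qed.

Lemma psd_pi j : (j < T)%N -> psd (pi j).
Proof.
by move=> jT; rewrite -ptr2_outer_state //; apply: (psd_gram (fun p c => state j (p, c))).
Qed.

Lemma interpolation_algorithm : algorithm_constituted L T pi (flag xi) (flag tau).
Proof.
have [Us hUs] := exists_step_unitaries.
have PhiE j : (j <= T)%N -> Phi L Us (flag xi) j = state j.
  elim: j => [|j IHj] jT; first exact: (hUs 0%N jT).2.
  by rewrite [LHS]/= IHj ?(hUs _ jT).2 // ltnW.
exists Us; split.
- by move=> j /hUs[].
- by move=> p; rewrite PhiE // /state eqxx.
- by move=> j jT; rewrite PhiE ?ptr2_outer_state //; apply: ltnW.
Qed.

End Interpolation.

Theorem proposition2 (R : realType) (IA IB IC : finType)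
    (hdim : (#|IA| * #|IB| <= #|IC|)%N)
    (idle : vec R[i] IB) (hidle : norm2 idle = 1)
    (L : op R[i] (IA * IB)%type) (hL : subunitary L)
    (hLidle : forall phi : vec R[i] IA,
        veceq (apply L (kron phi idle)) (kron phi idle))
    (xi tau : vec R[i] ((IA * IB) * IC)%type) (hxi : exists p, xi p != 0)
    (pibar : op R[i] (IA * IB)%type) (hpibar : psd pibar)
    (hbal : opeq
       (ptr2 (fun p q => opmul (opmul L pibar) (adj L) p q - pibar p q))
       (trBC (fun p q => outer tau tau p q - outer xi xi p q)))
    (v : vec R[i] ((IA * IB) * IC)%type)
    (hv : opeq (ptr2 (outer v v)) pibar) :
  forall T : nat, (0 < T)%N ->
  let pi : nat -> op R[i] (IA * IB)%type := fun j p q =>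
      kronop (fun a a' => ((T - j)%:R / T%:R) * trBC (outer xi xi) a a'
                          + (j%:R / T%:R) * trBC (outer tau tau) a a')
             (outer idle idle) p q
      + pibar p q / T%:R in
  [/\ (forall j, (j < T)%N -> psd (pi j)),
      (forall j, (j.+1 < T)%N ->
         opeq (ptr2 (pi j.+1)) (ptr2 (opmul (opmul L (pi j)) (adj L))))
    & algorithm_constituted L T pi
        (fun p : ((IA * IB) * (IC * 'I_2))%type => attachq xi (@ket0 R[i]) p + (sqrtC T%:R)^-1 * attachq v (@ket1 R[i]) p)
        (fun p : ((IA * IB) * (IC * 'I_2))%type => attachq tau (@ket0 R[i]) p + (sqrtC T%:R)^-1 * attachq v (@ket1 R[i]) p)].
Proof.
move=> T T_gt0 pi.
have IB_gt0 : (0 < #|IB|)%N.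
  rewrite lt0n; apply/eqP => /card0_eq IB0.
  by move: hidle; rewrite /norm2 big_pred0 // => /eqP; rewrite eq_sym oner_eq0.
have [w hw] := interp_purification xi tau T (leq_trans (leq_pmulr _ IB_gt0) hdim).
split.
- by move=> j; apply: (psd_pi idle hv hw).
- by move=> j jT; rewrite (ptr2_conj_pi hidle hLidle hbal) // ltnW.
- exact: (interpolation_algorithm hidle hLidle hbal hv T_gt0 hw).
Qed.
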